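(* Let $K$ be any field and $m,d\geq 1$. The quadruple $(G_{m\wr d}, B_m^d, N_{m\wr d}, \Sigma_m\wr\Sigma_d)$ is a generalized Tits system in the sense of Iwahori. More precisely: $B_m^d\cap N_{m\wr d}=T_m^d$ (the diagonal matrices of $\mathrm{GL}_{md}(K)$) is normal in $N_{m\wr d}$, $N_{m\wr d}/T_m^d\cong \Sigma_m\wr\Sigma_d\cong W_0\rtimes\Omega$ with $W_0=\Sigma_m^d$ (generated by the involutions $s_a^{(j)}$, $1\le a\le m-1$, $1\le j\le d$) and $\Omega=\{1\}\wr\Sigma_d\cong\Sigma_d$, every $t\in\Omega$ normalizes $B_m^d$ and the set $\{s_a^{(j)}\}$, $B_m^d t\neq B_m^d$ for $t\ne 1$, and for every generator $s=s_a^{(j)}$ and every $w\in\Sigma_m\wr\Sigma_d$ one has $sB_m^dw\subseteq B_m^dswB_m^d\cup B_m^dwB_m^d$ and $sB_m^d\neq B_m^d s$.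
   Context: Notation: $\Sigma_n$ is the symmetric group. The wreath product $\Sigma_m\wr\Sigma_d=\Sigma_m^d\rtimes\Sigma_d$ has multiplication determined by $w(g_1,\dots,g_d)=(g_{w^{-1}(1)},\dots,g_{w^{-1}(d)})w$; its elements are written $(w_i)_i\sigma$ with $w_i\in\Sigma_m$, $\sigma\in\Sigma_d$. For $g\in\Sigma_m$, $g^{(j)}$ denotes $(1,\dots,1,g,1,\dots,1)$ ($g$ in position $j$); $s_a=(a\ a{+}1)\in\Sigma_m$, and $t_k=(k\ k{+}1)\in\Sigma_d$. We regard $\Sigma_m\wr\Sigma_d\subseteq\Sigma_{md}$ via $(w_i)_i\sigma:(j-1)m+a\mapsto(\sigma(j)-1)m+w_{\sigma(j)}(a)$ ($1\le j\le d$, $1\le a\le m$). Over a field $K$: $\mathrm{GL}_n=\mathrm{GL}_n(K)$, $B_n$ its upper triangular matrices, $T_n$ its diagonal matrices. $N_{m\wr d}\subseteq\mathrm{GL}_{md}$ is the group of monomial matrices whose underlying permutation lies in $\Sigma_m\wr\Sigma_d\subseteq\Sigma_{md}$; $B_m^d\subseteq\mathrm{GL}_{md}$ is the group of block diagonal matrices $\mathrm{diag}(b_1,\dots,b_d)$ with $b_i\in B_m$; $G_{m\wr d}:=\langle B_m^d,N_{m\wr d}\rangle\subseteq\mathrm{GL}_{md}$. Elements of $\Sigma_m\wr\Sigma_d$ are identified with cosets in $N_{m\wr d}/T_m^d$, so expressions like $BwB$ are well defined. A generalized Tits system (Iwahori) is a quadruple $(G,B,N,W)$ with $G=\langle B,N\rangle$,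 $B\cap N$ normal in $N$, $W=N/(B\cap N)\cong W_0\rtimes\Omega$ where $W_0$ is generated by involutions $s_i$ ($i\in I$), every $t\in\Omega$ normalizes $B$ and $\{s_i\}$, $Bt\ne B$ unless $t=1$, and for all $s=s_i$, $w\in W$: $sBw\subseteq BswB\cup BwB$ and $sB\ne Bs$. *)

From mathcomp Require Import all_boot all_order all_algebra all_fingroup.
From mathcomp Require Import zify.

Set Implicit Arguments.
Unset Strict Implicit.
Unset Printing Implicit Defensive.
Import GRing.Theory.
Local Open Scope ring_scope.

(* Index set {1,...,md} is modelled by 'I_(d*m) (0-based): the pair     *)
(* (j,a) with j : 'I_d (block), a : 'I_m (position in block) is the     *)
(* index j*m + a  (the paper's (j-1)m + a, shifted to 0-based).         *)

Lemma idx_subproof (m d : nat) (j : 'I_d) (a : 'I_m) : (j * m + a < d * m)%N.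
Proof. case: j a => j Hj [a Ha] /=. nia. Qed.

Definition idx (m d : nat) (j : 'I_d) (a : 'I_m) : 'I_(d * m) :=
  Ordinal (idx_subproof j a).

Lemma blk_subproof (m d : nat) (i : 'I_(d * m)) : (i %/ m < d)%N.
Proof.
case: i => i Hi /=. case: m Hi => [|m] Hi; first by rewrite muln0 in Hi.
by rewrite ltn_divLR.
Qed.

Lemma pos_subproof (m d : nat) (i : 'I_(d * m)) : (i %% m < m)%N.
Proof.
case: i => i Hi /=. case: m Hi => [|m] Hi; first by rewrite muln0 in Hi.
by rewrite ltn_mod.
Qed.

Definition blk (m d : nat) (i : 'I_(d * m)) : 'I_d := Ordinal (blk_subproof i).
Definition pos (m d : nat) (i : 'I_(d * m)) : 'I_m := Ordinal (pos_subproof i).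

Lemma idx_blk_pos (m d : nat) (i : 'I_(d * m)) : idx (blk i) (pos i) = i.
Proof. apply: val_inj => /=. by rewrite -divn_eq. Qed.

Lemma idx_inj (m d : nat) (j j' : 'I_d) (a a' : 'I_m) :
  idx j a = idx j' a' -> j = j' /\ a = a'.
Proof.
move=> /(congr1 val) /= E.
have Hm : (0 < m)%N by case: (a) => x; case: (m).
have Ea : (a = a' :> nat).
  by have := congr1 (modn^~ m) E; rewrite !modnMDl !modn_small.
split; apply: val_inj => /=; last by [].
move: E; rewrite Ea => /addIn /eqP; rewrite eqn_mul2r => /orP[/eqP m0|/eqP //].
by rewrite m0 in Hm.
Qed.

Definition emb_fun (m d : nat) (w : {ffun 'I_d -> {perm 'I_m}}) (s : {perm 'I_d})
  (i : 'I_(d * m)) : 'I_(d * m) :=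
  idx (s (blk i)) (w (s (blk i)) (pos i)).

Lemma emb_fun_inj (m d : nat) w s : injective (@emb_fun m d w s).
Proof.
move=> i i' /idx_inj [E1 E2].
have Eb : blk i = blk i' by apply: (perm_inj E1).
rewrite E1 in E2. have Ep := perm_inj E2.
by rewrite -(idx_blk_pos i) -(idx_blk_pos i') Eb Ep.
Qed.

Definition emb (m d : nat) (w : {ffun 'I_d -> {perm 'I_m}}) (s : {perm 'I_d}) :
  {perm 'I_(d * m)} := perm (@emb_fun_inj m d w s).

Definition Wr (m d : nat) : {set {perm 'I_(d * m)}} :=
  [set emb w s | w : {ffun 'I_d -> {perm 'I_m}}, s : {perm 'I_d}].

Definition W0 (m d : nat) : {set {perm 'I_(d * m)}} :=
  [set emb w 1%g | w : {ffun 'I_d -> {perm 'I_m}}].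

Definition Omega (m d : nat) : {set {perm 'I_(d * m)}} :=
  [set emb [ffun=> (1%g : {perm 'I_m})] s | s : {perm 'I_d}].

Definition sgen (m d : nat) (j : 'I_d) (a b : 'I_m) : {ffun 'I_d -> {perm 'I_m}} :=
  [ffun i => if i == j then tperm a b else 1%g].

Definition Sgen (m d : nat) : {set {perm 'I_(d * m)}} :=
  [set p : {perm 'I_(d * m)} | [exists j : 'I_d, exists a : 'I_m, exists b : 'I_m,
     (b == a.+1 :> nat) && (p == emb (sgen j a b) 1%g)]].

Definition upper_tri {K : fieldType} (m : nat) (b : 'M[K]_m) : Prop :=
  forall a a' : 'I_m, (a' < a)%N -> b a a' = 0.

Definition Bm {K : fieldType} (m : nat) (b : 'M[K]_m) : Prop :=
  b \in unitmx /\ upper_tri b.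

Definition Bset {K : fieldType} (m d : nat) (A : 'M[K]_(d * m)) : Prop :=
  exists b : 'I_d -> 'M[K]_m, (forall j, Bm (b j)) /\
    forall (j j' : 'I_d) (a a' : 'I_m),
      A (idx j a) (idx j' a') = if j == j' then b j a a' else 0.

Definition Tset {K : fieldType} (m d : nat) (A : 'M[K]_(d * m)) : Prop :=
  A \in unitmx /\ is_diag_mx A.

Definition mono_with {K : fieldType} (n : nat) (A : 'M[K]_n) (p : {perm 'I_n}) : Prop :=
  forall i k : 'I_n, (A i k != 0) = (i == p k).

Definition Nset {K : fieldType} (m d : nat) (A : 'M[K]_(d * m)) : Prop :=
  exists2 p, p \in Wr m d & mono_with A p.

(* the permutation matrix of p (a representative of the coset p T) *)
Definition mon {K : fieldType} (n : nat) (p : {perm 'I_n}) : 'M[K]_n :=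
  \matrix_(i, k) ((i == p k)%:R : K).

Definition inBcoset {K : fieldType} (m d : nat) (X Y : 'M[K]_(d * m)) (A : 'M[K]_(d * m)) : Prop :=
  exists2 b, Bset b & A = X *m b *m Y.

Definition inBdcoset {K : fieldType} (m d : nat) (X : 'M[K]_(d * m)) (A : 'M[K]_(d * m)) : Prop :=
  exists b1 b2, [/\ Bset b1, Bset b2 & A = b1 *m X *m b2].

(* B_m^d is the group of invertible matrices supported in the preorder
   "i <= k and i, k lie in the same block".  That preorder is transitive, so
   such matrices are closed under products, and conjugation by a permutation
   matrix merely permutes the support.  Omega permutes whole blocks and keeps
   the order inside them, hence normalizes B; an adjacent transposition
   s = (x x+1) preserves the preorder except on the pair (x, x+1).  For the
   exchange axiom write b = b1 X_{x,x+1}(e) with b1 in B and b1 x (x+1) = 0,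
   so that s b1 s lies in B and s b w = (s b1 s) (s w) (w^-1 X w).  The last
   factor lies in B unless e <> 0 and w^-1 reverses x and x+1; in that case
   s X_{x,x+1}(e) X_{x+1,x}(-1/e) lies in B and s b w falls into B w B. *)

From mathcomp Require Import all_boot all_order all_algebra all_fingroup.
From mathcomp Require Import zify.

Set Implicit Arguments.
Unset Strict Implicit.
Unset Printing Implicit Defensive.
Import GRing.Theory.
Local Open Scope ring_scope.

Section WreathIndex.
Variables m d : nat.
Local Notation n := (d * m)%N.
Implicit Types (j : 'I_d) (a : 'I_m) (i k : 'I_n).

Lemma blk_idx j a : blk (idx j a) = j.
Proof. by have [] := idx_inj (idx_blk_pos (idx j a)). Qed.

Lemma pos_idx j a : pos (idx j a) = a.
Proof. by have [] := idx_inj (idx_blk_pos (idx j a)). Qed.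

Lemma idx_eq j j' a a' : (idx j a == idx j' a') = (j == j') && (a == a').
Proof. by apply/eqP/andP => [/idx_inj[-> ->]|[/eqP-> /eqP->]]. Qed.

Lemma ltn_idx j a a' : (idx j a < idx j a')%N = (a < a')%N.
Proof. by rewrite /= ltn_add2l. Qed.

Lemma ltn_blk_eq i k : blk i = blk k -> (i < k)%N = (pos i < pos k)%N.
Proof. by move=> bik; rewrite -{1}(idx_blk_pos i) -{1}(idx_blk_pos k) bik ltn_idx. Qed.

Lemma idx_ind (P : 'I_n -> Prop) : (forall j a, P (idx j a)) -> forall i, P i.
Proof. by move=> P_idx i; rewrite -(idx_blk_pos i). Qed.

Definition blk_le i k := (i <= k)%N && (blk i == blk k).

Lemma blk_le_refl : reflexive blk_le.
Proof. by move=> i; rewrite /blk_le leqnn eqxx. Qed.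

Lemma blk_le_trans : transitive blk_le.
Proof.
move=> k i l /andP[le_ik /eqP bik] /andP[le_kl /eqP bkl].
by rewrite /blk_le (leq_trans le_ik le_kl) bik bkl eqxx.
Qed.

Lemma blk_le_idx j j' a a' :
  blk_le (idx j a) (idx j' a') = (j == j') && (a <= a')%N.
Proof.
rewrite /blk_le !blk_idx andbC; case: eqP => [->|] //=.
by rewrite leq_add2l.
Qed.

End WreathIndex.

Arguments blk_le {m d} i k.

Section WreathProduct.
Variables m d : nat.
Local Notation n := (d * m)%N.
Local Notation wT := {ffun 'I_d -> {perm 'I_m}}.
Implicit Types (w v : wT) (s : {perm 'I_d}) (p t : {perm 'I_n}).
Implicit Types (j : 'I_d) (a : 'I_m) (i k : 'I_n).

Lemma emb_idx w s j a : emb w s (idx j a) = idx (s j) (w (s j) a).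
Proof. by rewrite /emb permE /emb_fun blk_idx pos_idx. Qed.

Lemma blk_emb w s i : blk (emb w s i) = s (blk i).
Proof. by rewrite /emb permE /emb_fun blk_idx. Qed.

Lemma emb_mul w s v s' :
  (emb w s * emb v s' = emb [ffun l => w (s'^-1 l) * v l] (s * s'))%g.
Proof.
by apply/permP; apply: idx_ind => j a; rewrite permM !emb_idx ffunE !permM permK.
Qed.

Definition fam1 : wT := [ffun=> 1%g].

Lemma emb1 : emb fam1 1 = 1%g.
Proof. by apply/permP; apply: idx_ind => j a; rewrite emb_idx !ffunE !perm1. Qed.

Lemma embV w s : ((emb w s)^-1 = emb [ffun l => (w (s l))^-1] s^-1)%g.
Proof.
apply/esym/eqP; rewrite eq_sym eq_invg_mul emb_mul mulgV -emb1.
by apply/eqP; congr emb; apply/ffunP => l; rewrite !ffunE invgK mulgV.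
Qed.

Lemma mem_Wr w s : emb w s \in Wr m d.
Proof. exact: imset2_f. Qed.

Lemma mem_W0 w : emb w 1 \in W0 m d.
Proof. exact: imset_f. Qed.

Lemma mem_Omega s : emb fam1 s \in Omega m d.
Proof. exact: imset_f. Qed.

Lemma Wr_group_set : group_set (Wr m d).
Proof.
apply/group_setP; split; first by rewrite -emb1 mem_Wr.
by move=> _ _ /imset2P[w s _ _ ->] /imset2P[v s' _ _ ->]; rewrite emb_mul mem_Wr.
Qed.

Lemma W0_group_set : group_set (W0 m d).
Proof.
apply/group_setP; split; first by rewrite -emb1 mem_W0.
by move=> _ _ /imsetP[w _ ->] /imsetP[v _ ->]; rewrite emb_mul mulg1 mem_W0.
Qed.

Lemma Omega_group_set : group_set (Omega m d).
Proof.
apply/group_setP; split; first by rewrite -emb1 mem_Omega.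
move=> _ _ /imsetP[s _ ->] /imsetP[s' _ ->]; rewrite emb_mul.
suff -> : [ffun l => fam1 (s'^-1 l) * fam1 l]%g = fam1 by apply: mem_Omega.
by apply/ffunP => l; rewrite !ffunE mulg1.
Qed.

Canonical Wr_group := Group Wr_group_set.
Canonical W0_group := Group W0_group_set.
Canonical Omega_group := Group Omega_group_set.

Lemma W0_normal : (W0 m d <| Wr m d)%g.
Proof.
rewrite /normal; apply/andP; split.
  by apply/subsetP => _ /imsetP[w _ ->]; rewrite mem_Wr.
apply/subsetP => _ /imset2P[w s _ _ ->]; rewrite inE; apply/subsetP => z.
rewrite mem_conjg -{2}(conjgKV (emb w s) z); case/imsetP=> v _ ->.
by rewrite conjgE embV !emb_mul mul1g mulVg mem_W0.
Qed.

Lemma mulg_W0_Omega : (W0 m d * Omega m d = Wr m d)%g.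
Proof.
apply/eqP; rewrite eqEsubset; apply/andP; split; apply/subsetP => x.
  by case/mulsgP => _ _ /imsetP[w _ ->] /imsetP[s _ ->] ->; rewrite emb_mul mem_Wr.
case/imset2P => w s _ _ ->.
have -> : emb w s = (emb [ffun j => w (s j)] 1 * emb fam1 s)%g.
  by apply/permP; apply: idx_ind => j a; rewrite permM !emb_idx !ffunE !perm1.
by rewrite mem_mulg ?mem_W0 ?mem_Omega.
Qed.

Lemma W0_Omega_trivI : (0 < m)%N -> (W0 m d :&: Omega m d = 1)%g.
Proof.
move=> m_gt0; apply/eqP; rewrite eqEsubset sub1set inE -{1}emb1 mem_W0.
rewrite -emb1 mem_Omega; apply/andP; split=> //; apply/subsetP => x.
rewrite inE => /andP[/imsetP[w _ ->] /imsetP[s _ Ew]].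
suff s1 : s = 1%g by rewrite Ew s1 emb1 inE.
apply/permP => j; move/permP/(_ (idx j (Ordinal m_gt0))): Ew.
by rewrite !emb_idx perm1 => /idx_inj[].
Qed.

Lemma emb_sgen j (a b : 'I_m) : emb (sgen j a b) 1 = tperm (idx j a) (idx j b).
Proof.
apply/permP; apply: idx_ind => j' c; rewrite emb_idx perm1 ffunE.
have [->|ne_j] := eqVneq j' j; last first.
  by rewrite perm1 tpermD // idx_eq (eq_sym j) (negPf ne_j).
case: tpermP => [->|->|/nesym/eqP ne_a /nesym/eqP ne_b]; rewrite ?tpermL ?tpermR //.
by rewrite tpermD // idx_eq eqxx.
Qed.

Lemma mem_Sgen j (a b : 'I_m) : (b : nat) = a.+1 -> emb (sgen j a b) 1 \in Sgen m d.
Proof.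
move=> ab; rewrite inE; apply/existsP; exists j; apply/existsP; exists a.
by apply/existsP; exists b; rewrite ab !eqxx.
Qed.

Lemma SgenP p : p \in Sgen m d ->
  exists x y : 'I_n, [/\ (y : nat) = x.+1, blk x = blk y & p = tperm x y].
Proof.
rewrite inE => /existsP[j /existsP[a /existsP[b /andP[/eqP ab /eqP->]]]].
by exists (idx j a), (idx j b); rewrite emb_sgen !blk_idx /= ab addnS.
Qed.

Lemma Sgen_involution p : p \in Sgen m d -> p != 1%g /\ (p * p = 1)%g.
Proof.
case/SgenP=> x [y [xy_adj _ ->]]; rewrite tperm2; split=> //.
apply/eqP => /permP/(_ x); rewrite tpermL perm1 => /(congr1 val) /=.
by rewrite xy_adj => /esym/n_Sn.
Qed.

Lemma Sgen_conj_Omega t : t \in Omega m d -> (Sgen m d :^ t = Sgen m d)%g.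
Proof.
case/imsetP=> s _ ->; apply/eqP; rewrite eqEcard cardJg leqnn andbT.
apply/subsetP => z; rewrite -[z](conjgKV (emb fam1 s)) memJ_conjg.
move: (z ^ _)%g => p; rewrite inE.
move=> /existsP[j /existsP[a /existsP[b /andP[/eqP ab /eqP->]]]].
by rewrite emb_sgen tpermJ !emb_idx !ffunE !perm1 -emb_sgen mem_Sgen.
Qed.

Lemma blk_le_Omega t i k : t \in Omega m d -> blk_le (t i) (t k) = blk_le i k.
Proof.
case/imsetP=> s _ ->; move: i k; apply: idx_ind => j a; apply: idx_ind => j' a'.
by rewrite !emb_idx !ffunE !perm1 !blk_le_idx (inj_eq perm_inj).
Qed.

Lemma blk_Wr p i k : p \in Wr m d -> (blk (p i) == blk (p k)) = (blk i == blk k).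
Proof. by case/imset2P=> v s _ _ ->; rewrite !blk_emb (inj_eq perm_inj). Qed.

End WreathProduct.

Definition adj_tperms k : {set {perm 'I_k}} :=
  [set tperm a b | a in 'I_k, b in 'I_k & val b == a.+1].

Lemma gen_adj_tperms k : <<adj_tperms k>>%g = [set: {perm 'I_k}].
Proof.
apply/eqP; rewrite eqEsubset subsetT /=; case: k => [|k].
  by apply/subsetP => p _; rewrite (_ : p = 1%g) ?group1 //; apply/permP => -[].
rewrite -(gen_tperm ord0) gen_subG; apply/subsetP => _ /imsetP[y _ ->].
have adj_gen (a b : 'I_k.+1) : val b = a.+1 -> tperm a b \in <<adj_tperms k.+1>>%g.
  by move=> ab; apply: mem_gen; apply: imset2_f; rewrite !inE ?ab ?eqxx.
move: {2}(val y) (erefl (val y)) => l; elim: l y => [|l IHl] y ly.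
  have y0 : y = ord0 by apply: val_inj.
  by rewrite y0 tperm1 group1.
have l_lt : (l < k.+1)%N by rewrite -ly; apply/ltnW/ltn_ord.
have [l0|l_gt0] := posnP l; first by apply: adj_gen; rewrite ly l0.
have -> : tperm ord0 y = (tperm ord0 (inord l) ^ tperm (inord l) y)%g.
  rewrite tpermJ tpermL tpermD // -val_eqE /= ?ly // inordK //.
  by rewrite -lt0n.
by apply: groupJ; [apply: IHl | apply: adj_gen]; rewrite /= ?inordK.
Qed.

Section Generation.
Variables m d : nat.
Local Notation n := (d * m)%N.
Local Notation wT := {ffun 'I_d -> {perm 'I_m}}.

Definition emb_at (j : 'I_d) (g : {perm 'I_m}) : {perm 'I_n} :=
  emb [ffun l => if l == j then g else 1%g] 1.

Lemma emb_atM j : {morph emb_at j : g h / (g * h)%g}.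
Proof.
move=> g h; apply/permP; apply: idx_ind => l a.
by rewrite permM !emb_idx !ffunE !perm1; case: eqP; rewrite ?permM ?perm1.
Qed.

Lemma emb_at1 j : emb_at j 1 = 1%g.
Proof. by rewrite -emb1; congr emb; apply/ffunP => l; rewrite !ffunE; case: eqP. Qed.

Lemma emb_at_gen j g : emb_at j g \in <<Sgen m d>>%g.
Proof.
have : g \in <<adj_tperms m>>%g by rewrite gen_adj_tperms inE.
case/gen_prodgP=> l [c adj_c ->]; rewrite (big_morph _ (emb_atM j) (emb_at1 j)).
apply: group_prod => i _; case/imset2P: (adj_c i) => a b _.
by rewrite !inE /= => /eqP ab ->; apply/mem_gen/mem_Sgen.
Qed.

Lemma W0_gen : W0 m d = <<Sgen m d>>%g.
Proof.
apply/eqP; rewrite eqEsubset; apply/andP; split; last first.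
  rewrite gen_subG; apply/subsetP => p.
  by rewrite inE => /existsP[j /existsP[a /existsP[b /andP[_ /eqP->]]]]; apply: mem_W0.
apply/subsetP => _ /imsetP[w _ ->].
suff emb_gen (r : seq 'I_d) (v : wT) :
    (forall l, l \notin r -> v l = 1%g) -> emb v 1 \in <<Sgen m d>>%g.
  by apply: (emb_gen (enum 'I_d) w) => l; rewrite mem_enum.
elim: r v => [|j r IHr] v v1.
  by rewrite (_ : v = fam1 m d) ?emb1 ?group1 //; apply/ffunP => l; rewrite ffunE v1.
pose v' : wT := [ffun l => if l == j then 1%g else v l].
have -> : emb v 1 = (emb v' 1 * emb_at j (v j))%g.
  apply/permP; apply: idx_ind => l a; rewrite permM !emb_idx !ffunE !perm1.
  by case: eqP => [->|]; rewrite ?perm1.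
rewrite groupM ?emb_at_gen // IHr // => l; rewrite ffunE.
by case: eqP => // /eqP ne_lj l_r; apply: v1; rewrite in_cons negb_or ne_lj.
Qed.

End Generation.

Section MonomialMatrices.
Variables (K : fieldType) (k : nat).
Implicit Types (A D : 'M[K]_k) (p t : {perm 'I_k}).

Lemma mon_perm p : mon p = perm_mx (p^-1)%g :> 'M[K]_k.
Proof. by apply/matrixP => i j; rewrite !mxE (canF_eq (permKV p)). Qed.

Lemma monM p t : mon p *m mon t = mon (t * p)%g :> 'M[K]_k.
Proof. by rewrite !mon_perm -perm_mxM invMg. Qed.

Lemma mon1 : mon 1 = 1%:M :> 'M[K]_k.
Proof. by rewrite mon_perm invg1 perm_mx1. Qed.

Lemma mon_unit p : (mon p : 'M[K]_k) \in unitmx.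
Proof. by rewrite mon_perm unitmx_perm. Qed.

Lemma invmx_mon p : invmx (mon p) = mon (p^-1)%g :> 'M[K]_k.
Proof.
by rewrite -[RHS]mul1mx -(mulVmx (mon_unit p)) -mulmxA monM mulVg mon1 mulmx1.
Qed.

Lemma mul_mon_mxE p A i j : (mon p *m A) i j = A ((p^-1)%g i) j.
Proof. by rewrite mon_perm -row_permE mxE. Qed.

Lemma mul_mx_monE p A i j : (A *m mon p) i j = A i (p j).
Proof. by rewrite mon_perm -col_permE mxE. Qed.

Lemma mon_conjE t A i j :
  (mon t *m A *m invmx (mon t)) i j = A ((t^-1)%g i) ((t^-1)%g j).
Proof. by rewrite invmx_mon mul_mx_monE mul_mon_mxE. Qed.

Lemma mono_withE A p i j : mono_with A p -> i != p j -> A i j = 0.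
Proof. by move=> Ap ne; apply/eqP; rewrite -[_ == 0]negbK Ap (negPf ne). Qed.

Lemma mono_with_mon p : mono_with (mon p : 'M[K]_k) p.
Proof. by move=> i j; rewrite mxE; case: (i == p j); rewrite ?oner_eq0 ?eqxx. Qed.

Lemma mono_with_mul A A' p p' :
  mono_with A p -> mono_with A' p' -> mono_with (A *m A') (p' * p)%g.
Proof.
move=> Ap A'p' i j; rewrite mxE (bigD1 (p' j)) //= big1 ?addr0.
  by rewrite mulf_eq0 negb_or Ap A'p' eqxx andbT permM.
by move=> l ne; rewrite (mono_withE A'p' ne) mulr0.
Qed.

Lemma mono_with_diag A p : mono_with A p ->
  A = diag_mx (\row_i A i ((p^-1)%g i)) *m mon p.
Proof.
move=> Ap; rewrite mul_diag_mx; apply/matrixP => i j; rewrite !mxE.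
have [->|ne] := eqVneq i (p j); first by rewrite permK mulr1.
by rewrite mulr0 (mono_withE Ap ne).
Qed.

Lemma mono_with_unit A p : mono_with A p -> A \in unitmx.
Proof.
move=> Ap; rewrite (mono_with_diag Ap) unitmx_mul mon_unit andbT unitmxE.
by rewrite det_diag unitfE; apply/prodf_neq0 => i _; rewrite mxE Ap permKV.
Qed.

Lemma diag_mx_unit (r : 'rV[K]_k) : (forall i, r 0 i != 0) -> diag_mx r \in unitmx.
Proof. by move=> r_neq0; rewrite unitmxE det_diag unitfE; apply/prodf_neq0. Qed.

Lemma upper_tri_unitmx A : upper_tri A -> A \in unitmx <-> forall i, A i i != 0.
Proof.
move=> A_up; rewrite unitmxE -det_tr det_trig; last first.
  by apply/is_trig_mxP => i j lt_ij; rewrite mxE A_up.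
rewrite unitfE; split=> [/prodf_neq0 A_neq0 i | A_neq0]; last first.
  by apply/prodf_neq0 => i _; rewrite mxE.
by have := A_neq0 i isT; rewrite mxE.
Qed.

End MonomialMatrices.

Arguments mon_perm {K k}.
Arguments monM {K k}.
Arguments mon1 {K k}.
Arguments mon_unit {K k}.
Arguments invmx_mon {K k}.
Arguments mono_with_mon {K k}.

Section Support.
Variables (K : fieldType) (k : nat) (R : rel 'I_k).

Definition supported (A : 'M[K]_k) := forall i j, A i j != 0 -> R i j.

Lemma supported_mul A B : transitive R ->
  supported A -> supported B -> supported (A *m B).
Proof.
move=> R_trans RA RB i j; apply: contraR => not_Rij; rewrite mxE big1 // => l _.
have [/RA Ril|] := boolP (A i l != 0); last by rewrite negbK => /eqP->; rewrite mul0r.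
have [/RB Rlj|] := boolP (B l j != 0); last by rewrite negbK => /eqP->; rewrite mulr0.
by case/negP: not_Rij; apply: R_trans Rlj.
Qed.

End Support.

Section Transvection.
Variables (K : fieldType) (k : nat).
Implicit Types (x y i j : 'I_k) (e : K).

Definition transv x y e : 'M[K]_k := 1%:M + e *: delta_mx x y.

Lemma transvE x y e i j : transv x y e i j = (i == j)%:R + e * ((i == x) && (j == y))%:R.
Proof. by rewrite !mxE. Qed.

Lemma mulmx_transv (B : 'M[K]_k) x y e i j :
  (B *m transv x y e) i j = B i j + e * B i x * (j == y)%:R.
Proof.
rewrite mulmxDr mulmx1 -scalemxAr !mxE -mulrA (bigD1 x) //= big1 ?addr0.
  by rewrite mxE eqxx.
by move=> l ne_lx; rewrite mxE (negPf ne_lx) mulr0.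
Qed.

Lemma transvK x y e : x != y -> transv x y (- e) *m transv x y e = 1%:M.
Proof.
move=> ne_xy; apply/matrixP => i j; rewrite mulmx_transv !transvE (negPf ne_xy).
by rewrite andbF mulr0 addr0 mxE -mulnb natrM mulrA !mulNr addrNK.
Qed.

Lemma transv_unit x y e : x != y -> transv x y e \in unitmx.
Proof. by move/(transvK e)/mulmx1_unit => []. Qed.

Lemma transv_conj_mon t x y e :
  mon t *m transv x y e *m invmx (mon t) = transv (t x) (t y) e.
Proof.
apply/matrixP => i j.
by rewrite mon_conjE !transvE (inj_eq perm_inj) !(canF_eq (permKV t)).
Qed.

End Transvection.

Section BlockMatrices.
Variables (K : fieldType) (m d : nat).
Local Notation n := (d * m)%N.
Local Notation M := 'M[K]_(d * m).
Implicit Types (A D : M) (p t : {perm 'I_n}) (i k : 'I_n).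

Lemma Tset_diag_mx (r : 'rV[K]_n) : (forall i, r 0 i != 0) -> Tset (diag_mx r).
Proof. by move=> r_neq0; split; [apply: diag_mx_unit | apply: diag_mx_is_diag]. Qed.

Lemma Tset_diag A i : Tset A -> A i i != 0.
Proof.
case=> A_unit /is_diag_mxP A_diag; move: A_unit; rewrite upper_tri_unitmx; first exact.
by move=> a a' lt_a'a; rewrite A_diag // neq_ltn lt_a'a orbT.
Qed.

Lemma mono_with_Tset A p : mono_with A p -> (p = 1%g <-> Tset A).
Proof.
move=> Ap; split=> [p1 | TA].
  rewrite (mono_with_diag Ap) p1 mon1 mulmx1; apply: Tset_diag_mx => i.
  by rewrite mxE invg1 perm1 Ap p1 perm1.
by apply/permP => i; rewrite perm1; apply/esym/eqP; rewrite -Ap Tset_diag.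
Qed.

Lemma Tset_conj_mono A D p : mono_with A p -> Tset D -> Tset (A *m D *m invmx A).
Proof.
move=> Ap TD; have [_ /diag_mxP[r Dr]] := TD; rewrite Dr in TD *.
have -> : A *m diag_mx r = diag_mx (\row_i r 0 ((p^-1)%g i)) *m A.
  rewrite mul_mx_diag mul_diag_mx; apply/matrixP => i j; rewrite !mxE.
  have [->|ne] := eqVneq i (p j); first by rewrite permK mulrC.
  by rewrite (mono_withE Ap ne) mulr0 mul0r.
rewrite mulmxK ?(mono_with_unit Ap) //; apply: Tset_diag_mx => i.
by rewrite mxE; have := Tset_diag ((p^-1)%g i) TD; rewrite mxE eqxx mulr1n.
Qed.

Definition Bmx A := A \in unitmx /\ supported blk_le A.

Lemma Bmx_upper_tri A : Bmx A -> upper_tri A.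
Proof.
case=> _ A_supp i k lt_ki; apply/eqP; apply: contraTT lt_ki => /A_supp /andP[le_ik _].
by rewrite -leqNgt.
Qed.

Lemma Bmx_diag A i : Bmx A -> A i i != 0.
Proof. by move=> BA; exact: (upper_tri_unitmx (Bmx_upper_tri BA)).1 (proj1 BA) i. Qed.

Lemma BsetP A : Bset A <-> Bmx A.
Proof.
split=> [[b [Bb Ab]] | BA].
  have Aik i k : A i k = if blk i == blk k then b (blk i) (pos i) (pos k) else 0.
    by rewrite -{1}(idx_blk_pos i) -{1}(idx_blk_pos k) Ab; case: eqP => // <-.
  have A_up : upper_tri A.
    move=> i k lt_ki; rewrite Aik; case: eqP => // bik.
    by apply: (Bb (blk i)).2; rewrite -(ltn_blk_eq (esym bik)).
  split.
    apply/upper_tri_unitmx => // i; rewrite Aik eqxx.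
    by have [b_unit b_up] := Bb (blk i); apply: (upper_tri_unitmx b_up).1.
  move=> i k nz_ik; have [bik|nbik] := eqVneq (blk i) (blk k); last first.
    by move: nz_ik; rewrite Aik (negPf nbik) eqxx.
  by rewrite /blk_le bik eqxx andbT leqNgt; apply: contraNN nz_ik => /A_up/eqP.
have A_up := Bmx_upper_tri BA; have [A_unit A_supp] := BA.
exists (fun j => \matrix_(a, a') A (idx j a) (idx j a')); split=> [j | j j' a a'].
  have b_up : upper_tri (\matrix_(a, a') A (idx j a) (idx j a')).
    by move=> a a' lt_a'a; rewrite mxE A_up ?ltn_idx.
  split=> //; apply/upper_tri_unitmx => // a; rewrite mxE.
  exact: (upper_tri_unitmx A_up).1.
case: eqP => [<-|/eqP ne_jj']; first by rewrite mxE.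
by apply/eqP; apply: contraNT ne_jj' => /A_supp /andP[_]; rewrite !blk_idx.
Qed.

Lemma Tset_Bmx A : Tset A -> Bmx A.
Proof.
case=> A_unit /is_diag_mxP A_diag; split=> // i k; apply: contraR => not_le.
by apply/eqP/A_diag; apply: contraNneq not_le => /val_inj->; rewrite blk_le_refl.
Qed.

Lemma Bmx1 : Bmx 1%:M.
Proof. by apply: Tset_Bmx; split; [apply: unitmx1 | apply: scalar_mx_is_diag]. Qed.

Lemma Bmx_mul A B : Bmx A -> Bmx B -> Bmx (A *m B).
Proof.
case=> A_unit A_supp [B_unit B_supp]; split; first by rewrite unitmx_mul A_unit.
exact: (supported_mul (@blk_le_trans m d)).
Qed.

Lemma Bmx_transv x y e : x != y -> e = 0 \/ blk_le x y -> Bmx (transv x y e).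
Proof.
move=> ne_xy He; split=> [|i k]; first exact: transv_unit.
rewrite transvE; have [->|_] := eqVneq i k; first by rewrite blk_le_refl.
rewrite add0r; case: andP => [[/eqP-> /eqP->]|]; last by rewrite mulr0 eqxx.
by case: He => [->|//]; rewrite mul0r eqxx.
Qed.

Lemma Bmx_conj t A : Bmx A -> (forall i k, A i k != 0 -> blk_le (t i) (t k)) ->
  Bmx (mon t *m A *m invmx (mon t)).
Proof.
case=> A_unit _ t_supp; split.
  by rewrite !unitmx_mul mon_unit A_unit unitmx_inv mon_unit.
by move=> i k; rewrite mon_conjE => /t_supp; rewrite !permKV.
Qed.

End BlockMatrices.

Arguments Bmx1 {K m d}.

Section TitsAxioms.
Variables (K : fieldType) (m d : nat).
Local Notation n := (d * m)%N.
Local Notation M := 'M[K]_(d * m).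
Implicit Types (A : M) (t : {perm 'I_n}).

Lemma Bset_Nset_Tset A : Bset A /\ Nset A <-> Tset A.
Proof.
split=> [[/BsetP BA [p _ Ap]] | TA].
  apply/(mono_with_Tset Ap)/permP => i; rewrite perm1; apply/esym/eqP.
  by rewrite -Ap Bmx_diag.
split; first exact/BsetP/Tset_Bmx.
exists 1%g; first by rewrite -emb1 mem_Wr.
move=> i k; rewrite perm1; have [->|ne_ik] := eqVneq i k; first exact: Tset_diag.
have [_ /is_diag_mxP A_diag] := TA.
by rewrite A_diag ?eqxx //; apply: contraNneq ne_ik => /val_inj.
Qed.

Lemma Bset_conj_Omega t : t \in Omega m d ->
  forall A, Bset A <-> Bset (mon t *m A *m invmx (mon t)).
Proof.
have conjB u (B : M) : u \in Omega m d -> Bmx B -> Bmx (mon u *m B *m invmx (mon u)).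
  by move=> Ou BB; apply: Bmx_conj => // i k /(proj2 BB); rewrite blk_le_Omega.
move=> Ot A; rewrite !BsetP; split; first exact: conjB.
move=> /(conjB _ _ (groupVr Ot)).
rewrite !invmx_mon invgK -invmx_mon !mulmxA mulVmx ?mon_unit // mul1mx.
by rewrite mulmxKV ?mon_unit.
Qed.

Lemma Omega_coset_neq t : (0 < m)%N -> t \in Omega m d -> t != 1%g ->
  ~ (forall A, Bset A <-> inBcoset 1%:M (mon t) A).
Proof.
move=> m_gt0 /imsetP[s _ ->] s_neq1 BtB.
have [b /BsetP[_ b_supp] b_t] := (BtB 1%:M).1 (proj2 (BsetP _) Bmx1).
have b_inv : b = mon (emb (fam1 m d) s)^-1.
  rewrite -invmx_mon -[b]mul1mx.
  by rewrite -(mulmxK (mon_unit (emb (fam1 m d) s)) (1%:M *m b)) -b_t mul1mx.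
rewrite {}b_inv in b_supp.
have [j sj] : exists j, s j != j.
  apply/existsP; rewrite -negb_forall; apply: contra s_neq1 => /forallP s1.
  by rewrite -emb1; apply/eqP; congr emb; apply/permP => j; rewrite perm1; apply/eqP.
pose i := idx j (Ordinal m_gt0).
have /b_supp : (mon (emb (fam1 m d) s)^-1 : M) i (emb (fam1 m d) s i) != 0.
  by rewrite mxE permK eqxx oner_eq0.
by rewrite /blk_le !blk_emb blk_idx eq_sym (negPf sj) andbF.
Qed.

Variables (x y : 'I_n).
Hypotheses (xy_adj : (y : nat) = x.+1) (bxy : blk x = blk y).

Lemma adj_neq : x != y.
Proof. by apply/eqP => /(congr1 val) /=; rewrite xy_adj => /n_Sn. Qed.

Lemma adj_blk_le : blk_le x y.
Proof. by rewrite /blk_le xy_adj leqnSn bxy eqxx. Qed.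

Lemma blk_tperm i : blk (tperm x y i) = blk i.
Proof. by case: tpermP => [->|->|]. Qed.

Lemma blk_le_tperm i k : blk_le i k -> (i, k) != (x, y) ->
  blk_le (tperm x y i) (tperm x y k).
Proof.
rewrite /blk_le !blk_tperm xpair_eqE => /andP[+ ->]; rewrite andbT.
have val_neq (u v : 'I_n) : u <> v -> (u : nat) != v.
  by move=> ne_uv; apply/eqP => /val_inj.
case: tpermP => [->|->|/val_neq ne_ix /val_neq ne_iy];
case: tpermP => [->|->|/val_neq ne_kx /val_neq ne_ky];
rewrite ?eqxx //=; lia.
Qed.

Lemma Bmx_conj_tperm (b : M) : Bmx b -> b x y = 0 ->
  Bmx (mon (tperm x y) *m b *m mon (tperm x y)).
Proof.
move=> Bb bxy0; rewrite -{2}(tpermV x y) -invmx_mon; apply: Bmx_conj => // i k nz_ik.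
apply: blk_le_tperm; first exact: (proj2 Bb).
by apply: contraNneq nz_ik => -[-> ->]; rewrite bxy0.
Qed.

Lemma Bmx_tperm_transv (e : K) : e != 0 ->
  Bmx (mon (tperm x y) *m transv x y e *m transv y x (- e^-1)).
Proof.
move=> e_neq0; split.
  by rewrite !unitmx_mul mon_unit !transv_unit ?adj_neq // eq_sym adj_neq.
have ne_yx : (y == x) = false by rewrite eq_sym (negPf adj_neq).
move=> i k; rewrite mulmx_transv !mul_mon_mxE tpermV !transvE (eq_sym _ k).
case: tpermP => [->|->|/eqP ne_ix /eqP ne_iy];
  rewrite ?eqxx ?ne_yx ?(negPf adj_neq) ?(negPf ne_ix) ?(negPf ne_iy) !mulrb /=.
- have [->|_] := eqVneq k x; first by rewrite blk_le_refl.
  rewrite !mulr0 !addr0; case: (eqVneq k y) => [->|_]; first by rewrite adj_blk_le.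
  by rewrite eqxx.
- have [->|_] := eqVneq k x.
    by rewrite (negPf adj_neq) mulr0 addr0 add0r !mulr1 mulNr mulVf // subrr eqxx.
  rewrite mulr0 !add0r addr0; case: (eqVneq k y) => [->|_]; first by rewrite blk_le_refl.
  by rewrite mulr0 eqxx.
- rewrite !(mulr0, mul0r, addr0, add0r); case: (eqVneq k i) => [->|_].
    by rewrite blk_le_refl.
  by rewrite eqxx.
Qed.

Lemma Bmx_factor_transv (b : M) : Bmx b ->
  exists b1 e, [/\ Bmx b1, b1 x y = 0 & b = b1 *m transv x y e].
Proof.
move=> Bb; pose e := b x y / b x x; exists (b *m transv x y (- e)), e; split.
- by apply: Bmx_mul => //; apply: Bmx_transv adj_neq _; right; apply: adj_blk_le.
- by rewrite mulmx_transv eqxx mulr1 mulNr /e divfK ?subrr ?Bmx_diag.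
- by rewrite -mulmxA transvK ?adj_neq // mulmx1.
Qed.

Lemma exchange_Bmx (w : {perm 'I_n}) (b : M) : w \in Wr m d -> Bmx b ->
  inBdcoset (mon (tperm x y) *m mon w) (mon (tperm x y) *m b *m mon w) \/
  inBdcoset (mon w) (mon (tperm x y) *m b *m mon w).
Proof.
move=> Ww /Bmx_factor_transv[b1 [e [Bb1 b1xy ->]]]; set s := tperm x y.
have Bw u v (c : K) : u != v -> blk u = blk v -> c = 0 \/ ((w^-1)%g u < (w^-1)%g v)%N ->
    Bmx (mon (w^-1)%g *m transv u v c *m mon w).
  have -> : mon w = invmx (mon (w^-1)%g) :> M by rewrite invmx_mon invgK.
  move=> ne_uv buv Hc; rewrite transv_conj_mon.
  apply: Bmx_transv; first by rewrite (inj_eq perm_inj).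
  case: Hc => [|lt]; [left | right] => //.
  by rewrite /blk_le (ltnW lt) blk_Wr ?groupV // buv eqxx.
have ss : mon s *m mon s = 1%:M :> M by rewrite monM tperm2 mon1.
have ww : mon w *m mon (w^-1)%g = 1%:M :> M by rewrite monM mulVg mon1.
case: (boolP ((e == 0) || ((w^-1)%g x < (w^-1)%g y)%N)) => [He|].
  left; exists (mon s *m b1 *m mon s), (mon (w^-1)%g *m transv x y e *m mon w).
  split; first exact/BsetP/Bmx_conj_tperm.
    by apply/BsetP/Bw; rewrite ?adj_neq //; case/orP: He => [/eqP|]; [left | right].
  rewrite !mulmxA -[_ *m mon s *m mon s]mulmxA ss mulmx1.
  by rewrite -[_ *m mon w *m mon (w^-1)%g]mulmxA ww mulmx1.
rewrite negb_or -leqNgt leq_eqVlt => /andP[e_neq0 /orP[/eqP/val_inj/perm_inj yx|lt_yx]].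
  by have := adj_neq; rewrite yx eqxx.
right; exists (mon s *m b1 *m mon s *m (mon s *m transv x y e *m transv y x (- e^-1))).
exists (mon (w^-1)%g *m transv y x e^-1 *m mon w); split.
- by apply/BsetP/Bmx_mul; [apply: Bmx_conj_tperm | apply: Bmx_tperm_transv].
- by apply/BsetP/Bw; [rewrite eq_sym adj_neq | rewrite bxy | right].
rewrite !mulmxA -[_ *m mon s *m mon s]mulmxA ss mulmx1.
rewrite -[_ *m mon w *m mon (w^-1)%g]mulmxA ww mulmx1.
by rewrite -[_ *m transv y x (- e^-1) *m _]mulmxA transvK ?mulmx1 // eq_sym adj_neq.
Qed.

Lemma tperm_coset_neq :
  ~ (forall A, inBcoset (mon (tperm x y)) 1%:M A <-> inBcoset 1%:M (mon (tperm x y)) A).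
Proof.
set s := tperm x y; move=> sB_Bs.
have BX : Bset (transv x y 1 : M).
  by apply/BsetP/Bmx_transv; [apply: adj_neq | right; apply: adj_blk_le].
have [b /BsetP[_ b_supp]] :=
  (sB_Bs (mon s *m transv x y 1 *m 1%:M)).1 (ex_intro2 _ _ _ BX erefl).
rewrite mulmx1 mul1mx => sX_bs.
have b_eq : b = mon s *m transv x y 1 *m invmx (mon s).
  by rewrite sX_bs mulmxK ?mon_unit.
move/(_ y x): b_supp; rewrite b_eq mon_conjE tpermV tpermL tpermR transvE.
rewrite (negPf adj_neq) !eqxx !mulrb /= mul1r add0r oner_eq0 => /(_ isT).
by rewrite /blk_le xy_adj ltnn.
Qed.

End TitsAxioms.

Unset Implicit Arguments.

Theorem proposition2p6 (K : fieldType) (m d : nat) :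
  (0 < m)%N -> (0 < d)%N ->
  (forall A : 'M[K]_(d * m), Bset A /\ Nset A <-> Tset A) /\
  (forall A D : 'M[K]_(d * m), Nset A -> Tset D -> Tset (A *m D *m invmx A)) /\
  group_set (Wr m d) /\
  (forall (A A' : 'M[K]_(d * m)) (p p' : {perm 'I_(d * m)}),
      mono_with A p -> mono_with A' p' -> mono_with (A *m A') (p' * p)%g) /\
  (forall p, p \in Wr m d -> exists A : 'M[K]_(d * m), mono_with A p) /\
  (forall (A : 'M[K]_(d * m)) p, mono_with A p -> (p = 1%g <-> Tset A)) /\
  W0 m d = <<Sgen m d>>%g /\
  (forall s, s \in Sgen m d -> s != 1%g /\ (s * s = 1)%g) /\
  (W0 m d <| Wr m d)%g /\
  (W0 m d * Omega m d = Wr m d)%g /\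
  (W0 m d :&: Omega m d = 1)%g /\
  (forall t, t \in Omega m d ->
     (forall A : 'M[K]_(d * m), Bset A <-> Bset (mon t *m A *m invmx (mon t))) /\
     (Sgen m d :^ t = Sgen m d)%g) /\
  (forall t, t \in Omega m d -> t != 1%g ->
     ~ (forall A : 'M[K]_(d * m), Bset A <-> inBcoset 1%:M (mon t) A)) /\
  (forall s w, s \in Sgen m d -> w \in Wr m d ->
     (forall A : 'M[K]_(d * m), inBcoset (mon s) (mon w) A ->
        inBdcoset (mon s *m mon w) A \/ inBdcoset (mon w) A) /\
     ~ (forall A : 'M[K]_(d * m), inBcoset (mon s) 1%:M A <-> inBcoset 1%:M (mon s) A)).
Proof.
move=> m_gt0 _.
split; first exact: Bset_Nset_Tset.
split; first by move=> A D [p _ Ap]; apply: Tset_conj_mono.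
split; first exact: Wr_group_set.
split; first exact: mono_with_mul.
split; first by move=> p _; exists (mon p); apply: mono_with_mon.
split; first exact: mono_with_Tset.
split; first exact: W0_gen.
split; first exact: Sgen_involution.
split; first exact: W0_normal.
split; first exact: mulg_W0_Omega.
split; first exact: W0_Omega_trivI.
split; first by move=> t Ot; split; [apply: Bset_conj_Omega | apply: Sgen_conj_Omega].
split; first by move=> t; apply: Omega_coset_neq.
move=> _ w /SgenP[x [y [xy_adj bxy ->]]] Ww; split; last exact: tperm_coset_neq.
by move=> A [b /BsetP Bb ->]; apply: exchange_Bmx.
Qed.
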